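(* Let $R$ be a proto-ranking on a finite set $\mathcal{X}$, and let $A\subseteq\mathcal{X}$ be such that $[x,y]_{R}\subseteq A$ for all $x,y\in A$ with $xRy$. Then the binary relation $R\cup A^2$ admits a complete and transitive extension.
   Context: A proto-ranking is an irreflexive and transitive binary relation. For a relation $Q$ and $a\,Q\,b$, the order interval is $[a,b]_Q=\{a,b\}\cup\{c: a\,Q\,c\,Q\,b\}$. A relation is complete if it is reflexive and total (for distinct $a,b$, $aQb$ or $bQa$). The strict part of $Q$ is $\{(a,b): aQb,\ \text{not } bQa\}$. A relation $Q'$ is an extension of $Q$ if $Q\subseteq Q'$ and the strict part of $Q$ is contained in the strict part of $Q'$. *)

From mathcomp Require Import all_boot.
Set Implicit Arguments. Unset Strict Implicit. Unset Printing Implicit Defensive.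

Definition relation (T : Type) := T -> T -> Prop.

Definition proto_ranking (T : Type) (R : relation T) : Prop :=
  (forall a, ~ R a a) /\ (forall a b c, R a b -> R b c -> R a c).

Definition transitiveR (T : Type) (Q : relation T) : Prop :=
  forall a b c, Q a b -> Q b c -> Q a c.

Definition in_order_interval (T : Type) (Q : relation T) (a b c : T) : Prop :=
  c = a \/ c = b \/ (Q a c /\ Q c b).

Definition complete (T : Type) (Q : relation T) : Prop :=
  (forall a, Q a a) /\ (forall a b, a <> b -> Q a b \/ Q b a).

Definition strict_part (T : Type) (Q : relation T) : relation T :=
  fun a b => Q a b /\ ~ Q b a.

Definition extension (T : Type) (Q Q' : relation T) : Prop :=
  (forall a b, Q a b -> Q' a b) /\
  (forall a b, strict_part Q a b -> strict_part Q' a b).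

Definition union_square (T : finType) (R : relation T) (A : {set T}) : relation T :=
  fun a b => R a b \/ (a \in A /\ b \in A).

(* Collapse A to a point.  The relation S = R ∪ A² becomes transitive once
   every pair (a, b) is added for which a is S-below and b is S-above some
   point of A.  Convexity of A guarantees that this reverses no strict pair
   of S: a point that is both S-below and S-above A lies in A.  Finally, any
   transitive relation on a finite set extends to a complete preorder by
   comparing the numbers of strict predecessors. *)
From mathcomp Require Import all_boot boolp.
Set Implicit Arguments. Unset Strict Implicit. Unset Printing Implicit Defensive.

Lemma extension_trans (T : Type) (Q1 Q2 Q3 : relation T) :
  extension Q1 Q2 -> extension Q2 Q3 -> extension Q1 Q3.
Proof.
move=> [sub12 strict12] [sub23 strict23].
by split=> a b H; [apply/sub23/sub12 | apply/strict23/strict12].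
Qed.

Section CompleteExtension.

Variables (T : finType) (Q : relation T).
Hypothesis Q_trans : transitiveR Q.

Definition strict_lower (x : T) : {set T} := [set y | `[< strict_part Q y x >]].

Lemma strict_part_transl (a b c : T) :
  strict_part Q a b -> Q b c -> strict_part Q a c.
Proof.
move=> [Qab nQba] Qbc; split; first exact: Q_trans Qab Qbc.
by move=> Qca; apply: nQba; apply: Q_trans Qbc Qca.
Qed.

Lemma strict_lower_sub (a b : T) : Q a b -> strict_lower a \subset strict_lower b.
Proof.
move=> Qab; apply/subsetP=> y; rewrite !inE.
by move=> /asboolP Sya; apply/asboolP; apply: strict_part_transl Sya Qab.
Qed.

Lemma strict_lower_proper (a b : T) :
  strict_part Q a b -> strict_lower a \proper strict_lower b.
Proof.
move=> Sab; apply/properP; split; first exact: strict_lower_sub (proj1 Sab).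
by exists a; rewrite !inE; apply/asboolP => // -[].
Qed.

Lemma complete_extension_of_transitive :
  exists Q' : relation T, extension Q Q' /\ complete Q' /\ transitiveR Q'.
Proof.
pose rank x := #|strict_lower x|.
exists (fun a b => rank a <= rank b); split; [split|split].
- by move=> a b /strict_lower_sub/subset_leq_card.
- move=> a b /strict_lower_proper/proper_card lt_ab; split; first exact: ltnW.
  by rewrite leqNgt lt_ab.
- split=> [a //|a b _].
  by case: (leqP (rank a) (rank b)) => [|/ltnW]; [left|right].
- by move=> a b c; apply: leq_trans.
Qed.

End CompleteExtension.

Section CollapseConvexSet.

Variables (T : finType) (R : relation T) (A : {set T}).
Hypothesis R_trans : transitiveR R.
Hypothesis A_convex : forall x y, x \in A -> y \in A -> R x y ->
  forall c, in_order_interval R x y c -> c \in A.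

Local Notation S := (union_square R A).

Definition below_set (a : T) : Prop := exists2 u, u \in A & S a u.
Definition above_set (b : T) : Prop := exists2 v, v \in A & S v b.

(* The transitive closure of R ∪ A²: any chain of its steps shortens to a
   single step or to one passing through A once. *)
Definition union_square_closure (a b : T) : Prop :=
  S a b \/ below_set a /\ above_set b.

Lemma below_set_mem (a : T) : a \in A -> below_set a.
Proof. by move=> aA; exists a => //; right. Qed.

Lemma above_set_mem (b : T) : b \in A -> above_set b.
Proof. by move=> bA; exists b => //; right. Qed.

Lemma below_set_union_square (a b : T) : S a b -> below_set b -> below_set a.
Proof.
case=> [Rab|[aA _]]; last by move=> _; apply: below_set_mem.
case=> u uA [Rbu|[bA _]].
- by exists u => //; left; apply: R_trans Rab Rbu.
- by exists b => //; left.
Qed.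

Lemma above_set_union_square (a b : T) : S a b -> above_set a -> above_set b.
Proof.
case=> [Rab|[_ bA]]; last by move=> _; apply: above_set_mem.
case=> v vA [Rva|[_ aA]].
- by exists v => //; left; apply: R_trans Rva Rab.
- by exists a => //; left.
Qed.

Lemma below_above_set_mem (c : T) : below_set c -> above_set c -> c \in A.
Proof.
case=> [u uA [Rcu|[cA _]]] [v vA [Rvc|[_ cA']]] //.
by apply: (A_convex vA uA (R_trans Rvc Rcu)); right; right.
Qed.

Lemma union_square_closure_trans : transitiveR union_square_closure.
Proof.
move=> a b c [Sab|[below_a above_b]] [Sbc|[below_b above_c]].
- case: Sab Sbc => [Rab|[aA bA]] [Rbc|[bA' cA]].
  + by left; left; apply: R_trans Rab Rbc.
  + by right; split; [exists b => //; left | apply: above_set_mem].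
  + by right; split; [apply: below_set_mem | exists b => //; left].
  + by left; right.
- by right; split=> //; apply: below_set_union_square Sab below_b.
- by right; split=> //; apply: above_set_union_square Sbc above_b.
- by right.
Qed.

Lemma extension_union_square_closure : extension S union_square_closure.
Proof.
split=> [a b Sab|a b [Sab nSba]]; first by left.
split; first by left.
case=> [//|[below_b above_a]].
case: Sab nSba => [Rab|[aA bA]] nSba; last by apply: nSba; right.
have below_a : below_set a by apply: below_set_union_square below_b; left.
have above_b : above_set b by apply: above_set_union_square above_a; left.
by apply: nSba; right; split; exact: below_above_set_mem.
Qed.

End CollapseConvexSet.

Theorem mainTheorem14 (T : finType) (R : relation T) (A : {set T}) :
  proto_ranking R ->
  (forall x y, x \in A -> y \in A -> R x y ->
     forall c, in_order_interval R x y c -> c \in A) ->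
  exists Q : relation T,
    extension (union_square R A) Q /\ complete Q /\ transitiveR Q.
Proof.
move=> [_ R_trans] A_convex.
have [Q [extQ QP]] :=
  complete_extension_of_transitive (union_square_closure_trans (A := A) R_trans).
exists Q; split=> //.
exact: extension_trans (extension_union_square_closure R_trans A_convex) extQ.
Qed.
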